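(* Let $q\ge 2$, $n\ge1$, $d_X\ge1$, $d_Z\ge 1$ be integers, and let $C\subseteq\{0,1,\dots,q-1\}^n$ be a classical code with minimum Hamming distance at least $d_X$ and with $|C|\ge 2V_q(d_Z-1)$. Enumerate $C=\{{\bf c}_1,\dots,{\bf c}_m\}$ and let $A$ be the real matrix with $m$ columns whose rows are: one row of all ones; and, for each ${\bf z}\in\{0,\dots,q-1\}^n$ with $1\le\mathrm{wt}({\bf z})\le d_Z-1$, the two rows with $k$-th entries $\cos(2\pi\,{\bf z}^T{\bf c}_k/q)$ and $\sin(2\pi\,{\bf z}^T{\bf c}_k/q)$. Then $A$ has a nonzero real kernel vector, and for every nonzero ${\bf x}\in\ker(A)\subseteq\mathbb{R}^m$, setting $x_k^+=\max\{x_k,0\}$, $x_k^-=\max\{-x_k,0\}$, $x=\sum_k x_k^+$ and $$|0_L\rangle=\frac{1}{\sqrt{x}}\sum_{k=1}^m\sqrt{x_k^+}\,|{\bf c}_k\rangle,\qquad |1_L\rangle=\frac{1}{\sqrt{x}}\sum_{k=1}^m\sqrt{x_k^-}\,|{\bf c}_k\rangle,$$ the span of $|0_L\rangle,|1_L\rangle$ is a quantum code encoding one logical qubit with bit-flip distance $d_X$ and phase-flip distance $d_Z$; that is, $|0_L\rangle,|1_L\rangle$ are orthonormal, supported on disjoint subsets of $C$, and for every generalized Pauli operator $P=X^{\bf a}Z^{\bf b}$ with $\mathrm{wt}({\bf a})\le d_X-1$ and $\mathrm{wt}({\bf b})\le d_Z-1$ there is a constant $c_P\in\mathbb{C}$ with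 $\langle i_L|P|j_L\rangle=c_P\,\delta_{ij}$ for all $i,j\in\{0,1\}$.
   Context: Let $\omega=e^{2\pi i/q}$. On $\mathbb{C}^q$ with orthonormal basis $|0\rangle,\dots,|q-1\rangle$, $Z=\sum_{j=0}^{q-1}\omega^j|j\rangle\langle j|$ and $X=\sum_{j\in\mathbb{Z}_q}|j\rangle\langle j+1|$ (indices mod $q$). For ${\bf a},{\bf b}\in\{0,\dots,q-1\}^n$, $X^{\bf a}Z^{\bf b}=\bigotimes_{i=1}^n X^{a_i}Z^{b_i}$; $\mathrm{wt}$ denotes Hamming weight. For ${\bf c}\in\{0,\dots,q-1\}^n$, $|{\bf c}\rangle=|c_1\rangle\otimes\cdots\otimes|c_n\rangle$ and ${\bf z}^T{\bf c}=\sum_iz_ic_i$. $V_q(r)=\sum_{w=0}^r\binom{n}{w}(q-1)^w$ is the volume of the $q$-ary Hamming ball of radius $r$. *)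

From mathcomp Require Import all_boot all_order all_algebra.
From mathcomp Require Import reals trigo.
From mathcomp Require Import complex.
Set Implicit Arguments. Unset Strict Implicit. Unset Printing Implicit Defensive.
Import Order.TTheory GRing.Theory Num.Theory.
Local Open Scope ring_scope.
Local Open Scope complex_scope.

Definition word (q n : nat) := {ffun 'I_n -> 'I_q}.

Definition wt q n (z : word q n) : nat := #|[set i | val (z i) != 0%N]|.
Definition hdist q n (u v : word q n) : nat := #|[set i | u i != v i]|.

Definition Vq (q n r : nat) : nat := (\sum_(w < r.+1) 'C(n, w) * (q - 1) ^ w)%N.

Definition dotw q n (z c : word q n) : nat := (\sum_(i < n) val (z i) * val (c i))%N.

(* Row labels of A: None = the all-ones row; Some (z, false) = cos row;
   Some (z, true) = sin row, for 1 <= wt z <= dZ - 1. *)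
Definition rowlab q n := option (word q n * bool).

Definition rowsA q n (dZ : nat) : {set rowlab q n} :=
  [set r : rowlab q n | match r with
                        | None => true
                        | Some (z, _) => (1 <= wt z <= dZ - 1)%N
                        end].

Definition Aentry (R : realType) q n m (c : 'I_m -> word q n)
  (r : rowlab q n) (k : 'I_m) : R :=
  match r with
  | None => 1
  | Some (z, false) => cos (2 * pi * (dotw z (c k))%:R / q%:R)
  | Some (z, true) => sin (2 * pi * (dotw z (c k))%:R / q%:R)
  end.

Definition Amx (R : realType) q n (dZ m : nat) (c : 'I_m -> word q n)
  : 'M[R]_(#|rowsA q n dZ|, m) :=
  \matrix_(i < #|rowsA q n dZ|, k < m)
     Aentry R c (@enum_val _ (mem (rowsA q n dZ)) i) k.

Definition xpos (R : realType) m (x : 'cV[R]_m) (k : 'I_m) : R := Num.max (x k 0) 0.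
Definition xneg (R : realType) m (x : 'cV[R]_m) (k : 'I_m) : R := Num.max (- x k 0) 0.
Definition xsum (R : realType) m (x : 'cV[R]_m) : R := \sum_k xpos x k.

(* logical states |0_L> (b = false) and |1_L> (b = true), as vectors in
   C^{q^n} given by their coordinates in the basis |w>, w a word *)
Definition ketL (R : realType) q n m (c : 'I_m -> word q n) (x : 'cV[R]_m)
  (b : bool) : word q n -> R[i] :=
  fun w => \sum_(k < m) (c k == w)%:R *
     ((Num.sqrt (if b then xneg x k else xpos x k) / Num.sqrt (xsum x))%:C).

Definition omega (R : realType) (q : nat) : R[i] :=
  cos (2 * pi / q%:R) +i* sin (2 * pi / q%:R).

Definition Xq (R : realType) (q : nat) : 'M[R[i]]_q :=
  \matrix_(i < q, j < q) (val j == ((val i).+1 %% q)%N)%:R.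
Definition Zq (R : realType) (q : nat) : 'M[R[i]]_q :=
  \matrix_(i < q, j < q) ((i == j)%:R * omega R q ^+ val i).

Definition mxpow (T : ringType) p (M : 'M[T]_p) (k : nat) : 'M[T]_p :=
  iter k (fun N => M *m N) 1%:M.

(* matrix entries <u| X^a Z^b |v> of the tensor product operator *)
Definition pauli (R : realType) q n (a b : word q n) (u v : word q n) : R[i] :=
  \prod_(i < n) (mxpow (Xq R q) (val (a i)) *m mxpow (Zq R q) (val (b i))) (u i) (v i).

Definition braket (R : realType) q n (phi : word q n -> R[i])
  (P : word q n -> word q n -> R[i]) (psi : word q n -> R[i]) : R[i] :=
  \sum_(u : word q n) \sum_(v : word q n) (phi u)^* * P u v * psi v.
Definition inner (R : realType) q n (phi psi : word q n -> R[i]) : R[i] :=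
  \sum_(u : word q n) (phi u)^* * psi u.

From mathcomp Require Import all_boot all_order all_algebra.
From mathcomp Require Import reals trigo.
From mathcomp Require Import complex.
From mathcomp Require Import zify.
Set Implicit Arguments. Unset Strict Implicit. Unset Printing Implicit Defensive.
Import Order.TTheory GRing.Theory Num.Theory.

(* A has 1 + 2 #{z | 1 <= wt z <= d_Z - 1} < 2 V_q(d_Z - 1) <= |C| = m rows (the zero
   word is in the ball but labels no cos/sin pair), so its kernel is nontrivial.
   The rows of A say exactly that sum_k x_k omega^(z.c_k) = 0 whenever
   wt z <= d_Z - 1; splitting x = x^+ - x^- turns this into equality of the
   Z^b-expectations of |0_L> and |1_L> (and, for z = 0, of their norms), while
   x^+ and x^- have disjoint supports, which gives orthogonality.  An operator
   X^a Z^b with a <> 0 maps |c> to a multiple of |c + a>, at Hamming distance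
   wt a < d_X from c, hence outside C: all its matrix elements on the code vanish. *)

Lemma wt_eq0 q n (z : word q n) : (wt z == 0) = [forall i, val (z i) == 0].
Proof.
rewrite cards_eq0; apply/eqP/forallP => [z0 i | z0].
  by apply: contraFT (in_set0 i); rewrite -z0 inE.
by apply/setP => i; rewrite !inE z0.
Qed.

Lemma card_wt_eq q n w : 0 < q ->
  #|[set z : word q n | wt z == w]| <= 'C(n, w) * (q - 1) ^ w.
Proof.
move=> q_gt0; pose y0 : 'I_q := Ordinal q_gt0.
pose supp (z : word q n) : {set 'I_n} := [set i | val (z i) != 0].
rewrite -sum1_card (partition_big supp (fun S => #|S| == w)) => [|z]; last first.
  by rewrite inE.
have card_supp S : \sum_(z | (z \in [set z | wt z == w]) && (supp z == S)) 1
                     <= (q - 1) ^ #|S|.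
  have -> : q - 1 = #|predC1 y0| by rewrite cardC1 card_ord subn1.
  rewrite sum1_card -(card_pffun_on y0).
  apply/subset_leq_card/subsetP => z; rewrite !inE => /andP[_ /eqP <-].
  apply/pffun_onP; split.
    apply/subsetP => i; rewrite !inE; apply: contra => /eqP zi.
    exact/eqP/val_inj.
  by move=> y /imageP [] i; rewrite !inE => zi0 ->; apply: contra zi0 => /eqP ->.
apply: (@leq_trans (\sum_(S : {set 'I_n} | #|S| == w) (q - 1) ^ w)).
  by apply: leq_sum => S /eqP wS; rewrite -[X in _ ^ X]wS.
rewrite sum_nat_const (eq_card (B := [set S : {set 'I_n} | #|S| == w])).
  by rewrite card_draws card_ord.
by move=> S; rewrite inE.
Qed.

Lemma card_wt_leq q n r : 0 < q -> #|[set z : word q n | wt z <= r]| <= Vq q n r.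
Proof.
move=> q_gt0; elim: r => [|r IHr].
  rewrite /Vq big_ord1; apply: leq_trans _ (card_wt_eq n 0 q_gt0).
  by apply/eq_leq/eq_card => z; rewrite !inE leqn0.
rewrite /Vq big_ord_recr /=.
have -> : [set z : word q n | wt z <= r.+1] =
          [set z | wt z <= r] :|: [set z | wt z == r.+1].
  by apply/setP => z; rewrite !inE leq_eqVlt ltnS orbC.
apply: leq_trans (leq_card_setU _ _) _.
by apply: leq_add; [exact: IHr | exact: card_wt_eq].
Qed.

Lemma card_rowsA q n dZ : 0 < q -> #|rowsA q n dZ| < 2 * Vq q n (dZ - 1).
Proof.
move=> q_gt0.
set T := [set z : word q n | 1 <= wt z <= dZ - 1].
have T_lt_ball : #|T| < #|[set z : word q n | wt z <= dZ - 1]|.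
  apply/proper_card/properP; split.
    by apply/subsetP => z; rewrite !inE => /andP[].
  have wt0 : wt ([ffun => Ordinal q_gt0] : word q n) = 0.
    by apply/eqP; rewrite wt_eq0; apply/forallP => i; rewrite ffunE.
  by exists [ffun => Ordinal q_gt0]; rewrite !inE wt0.
have rows_sub : rowsA q n dZ \subset None |: (Some @: setX T [set: bool]).
  apply/subsetP => [[[z b]|]]; rewrite !inE //= => wt_z.
  by apply/imsetP; exists (z, b); rewrite // !inE wt_z.
apply: leq_ltn_trans (subset_leq_card rows_sub) _.
rewrite cardsU1 card_imset ?cardsX ?cardsT ?card_bool; last by move=> ? ? [].
have := leq_trans T_lt_ball (card_wt_leq n (dZ - 1) q_gt0).
by case: (None \notin _) => /=; lia.
Qed.

Local Open Scope ring_scope.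
Local Open Scope complex_scope.

Lemma kernel_nontrivial (F : fieldType) p m (A : 'M[F]_(p, m)) :
  (p < m)%N -> exists x : 'cV_m, x != 0 /\ A *m x = 0.
Proof.
move=> p_lt_m; set K := kermx A^T.
have : (\rank K != 0)%N.
  by rewrite /K mxrank_ker mxrank_tr -lt0n subn_gt0 (leq_ltn_trans (rank_leq_row A)).
rewrite mxrank_eq0 => K_neq0.
have [i Ki_neq0] : exists i, row i K != 0.
  apply/existsP; apply: contraR K_neq0; rewrite negb_exists => /forallP K0.
  by apply/eqP/row_matrixP => i; rewrite row0; exact/eqP/negPn/K0.
exists (row i K)^T; rewrite trmx_eq0; split=> //.
by rewrite -[A]trmxK -trmx_mul -row_mul mulmx_ker row0 trmx0.
Qed.

Lemma omega_expr (R : realType) q N :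
  omega R q ^+ N = cos (2 * pi * N%:R / q%:R) +i* sin (2 * pi * N%:R / q%:R).
Proof.
elim: N => [|N IHN]; first by rewrite expr0 mulr0 mul0r cos0 sin0.
have -> : 2 * pi * N.+1%:R / q%:R = 2 * pi * N%:R / q%:R + 2 * pi / q%:R :> R.
  by rewrite -[N.+1]addn1 natrD mulrDr mulr1 mulrDl.
by rewrite exprSr IHN cosD sinD /omega; simpc; rewrite (addrC (sin _ * _)).
Qed.

Section Pauli.
Variables (R : realType) (q : nat).
Hypothesis q_gt0 : (0 < q)%N.

Lemma mxpow_Xq_entry a (i j : 'I_q) :
  mxpow (Xq R q) a i j = (val j == (val i + a) %% q)%N%:R.
Proof.
elim: a i j => [|a IHa] i j.
  by rewrite !mxE addn0 (modn_small (ltn_ord i)) eq_sym.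
rewrite /= mxE (bigD1 (Ordinal (ltn_pmod (val i).+1 q_gt0))) //= big1 ?addr0.
  by rewrite mxE eqxx mul1r IHa /= modnDml addSnnS.
move=> k k_neq; rewrite mxE; case: eqP => [ki | _]; last by rewrite mul0r.
by case/eqP: k_neq; apply: val_inj.
Qed.

Lemma mxpow_Zq_entry b (i j : 'I_q) :
  mxpow (Zq R q) b i j = (i == j)%:R * omega R q ^+ (val i * b).
Proof.
elim: b i j => [|b IHb] i j; first by rewrite !mxE muln0 expr0 mulr1.
rewrite /= mxE (bigD1 i) //= big1 ?addr0 => [|k k_neq]; last first.
  by rewrite mxE eq_sym (negbTE k_neq) !mul0r.
rewrite mxE IHb eqxx mul1r mulnS exprD.
by case: (i == j); rewrite ?mul0r ?mulr0 ?mul1r.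
Qed.

Lemma pauliE n (a b u v : word q n) :
  pauli R a b u v = \prod_(i < n) ((val (v i) == (val (u i) + val (a i)) %% q)%N%:R
                                   * omega R q ^+ (val (v i) * val (b i))).
Proof.
apply: eq_bigr => i _; rewrite mxE (bigD1 (v i)) //= big1 ?addr0 => [|k k_neq].
  by rewrite mxpow_Xq_entry mxpow_Zq_entry eqxx mul1r.
by rewrite mxpow_Zq_entry (negbTE k_neq) mul0r mulr0.
Qed.

Lemma pauli_neq0_shift n (a b u v : word q n) : pauli R a b u v != 0 ->
  forall i, val (v i) = ((val (u i) + val (a i)) %% q)%N.
Proof.
move=> P_neq0 i; apply/eqP; apply: contraNT P_neq0 => vi_neq.
by rewrite pauliE (bigD1 i) //= (negbTE vi_neq) mulr0n !mul0r.
Qed.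

Lemma pauli_eq0 n (a b u v : word q n) :
  (wt a != 0)%N -> (u != v -> wt a < hdist u v)%N -> pauli R a b u v = 0.
Proof.
move=> wt_a far; apply/eqP/negPn/negP => /pauli_neq0_shift shift.
have a_eq0 i : val (a i) = 0%N -> v i = u i.
  by move=> ai0; apply: val_inj; rewrite shift ai0 addn0 (modn_small (ltn_ord _)).
have close : (hdist u v <= wt a)%N.
  apply/subset_leq_card/subsetP => i; rewrite !inE.
  by apply: contra => /eqP /a_eq0 ->.
have [i ai_neq0] : exists i, val (a i) != 0%N.
  by apply/existsP; move: wt_a; rewrite wt_eq0 negb_forall.
have : u != v.
  apply: contra ai_neq0 => /eqP uv; move: (shift i); rewrite uv => vi.
  have : (val (v i) + val (a i) == val (v i) + 0 %[mod q])%N.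
    by rewrite addn0 -vi (modn_small (ltn_ord _)).
  by rewrite eqn_modDl mod0n (modn_small (ltn_ord _)).
by move/far; rewrite ltnNge close.
Qed.

Lemma pauli_wt0 n (a b u v : word q n) :
  wt a = 0%N -> pauli R a b u v = (u == v)%:R * omega R q ^+ dotw b v.
Proof.
move/eqP; rewrite wt_eq0 => /forallP a0; rewrite pauliE.
under eq_bigr => i _ do rewrite (eqP (a0 i)) addn0 (modn_small (ltn_ord (u i))).
have [<- | uv] := eqVneq u v.
  rewrite mul1r /dotw -prodrXr; apply: eq_bigr => i _.
  by rewrite eqxx mul1r mulnC.
have [i ui_neq] : exists i, u i != v i.
  apply/existsP; apply: contraNT uv; rewrite negb_exists => /forallP uv_eq.
  by apply/eqP/ffunP => i; exact/eqP/negPn/uv_eq.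
rewrite mul0r (bigD1 i) //= (_ : (val (v i) == val (u i)) = false) ?mul0r //.
by apply/negbTE; rewrite eq_sym.
Qed.

End Pauli.

Section CodeStates.
Variables (R : realType) (q n m : nat) (c : 'I_m -> word q n) (x : 'cV[R]_m).
Hypothesis c_inj : injective c.

Definition weightL (b : bool) k := if b then xneg x k else xpos x k.
Definition ampL b k := Num.sqrt (weightL b k) / Num.sqrt (xsum x).

Lemma weightL_ge0 b k : 0 <= weightL b k.
Proof. by case: b; rewrite /weightL /xpos /xneg le_max lexx orbT. Qed.

Lemma xsum_ge0 : 0 <= xsum x.
Proof. by apply: sumr_ge0 => k _; exact: (weightL_ge0 false). Qed.

Lemma xpos_xneg_eq0 k : xpos x k = 0 \/ xneg x k = 0.
Proof.
rewrite /xpos /xneg; case: (lerP 0 (x k 0)) => x_k; last by left.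
by right; rewrite max_r // oppr_le0.
Qed.

Lemma xposBxneg k : xpos x k - xneg x k = x k 0.
Proof.
rewrite /xpos /xneg; case: (lerP 0 (x k 0)) => x_k.
  by rewrite max_r ?subr0 // oppr_le0.
by rewrite max_l ?sub0r ?opprK // oppr_ge0 ltW.
Qed.

Lemma ampL_mul i j k : ampL i k * ampL j k = (i == j)%:R * (weightL i k / xsum x).
Proof.
have [<- | ij] := eqVneq i j.
  by rewrite mul1r -expr2 expr_div_n !sqr_sqrtr ?xsum_ge0 ?weightL_ge0.
have [wi0 | wj0] : weightL i k = 0 \/ weightL j k = 0.
  by case: i j ij => [] [] //= _; case: (xpos_xneg_eq0 k); auto.
all: by rewrite /ampL ?wi0 ?wj0 sqrtr0 !mul0r ?mulr0.
Qed.

Lemma sum_over_code (V : nmodType) (F : word q n -> V) :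
  (forall w, w \notin codom c -> F w = 0) -> \sum_w F w = \sum_k F (c k).
Proof.
move=> F0; rewrite (bigID (mem (codom c))) /= [X in _ + X]big1 ?addr0 => [|w /F0 //].
rewrite -big_uniq /=; last by rewrite codomE map_inj_uniq ?enum_uniq.
by rewrite codomE big_map big_enum.
Qed.

Lemma ketL_out b w : w \notin codom c -> ketL c x b w = 0.
Proof.
move=> w_out; rewrite /ketL big1 // => k _.
rewrite (_ : c k == w = false) ?mul0r //.
by apply: contraNF w_out => /eqP <-; exact: codom_f.
Qed.

Lemma ketL_code b k : ketL c x b (c k) = (ampL b k)%:C.
Proof.
rewrite /ketL (bigD1 k) //= eqxx mul1r big1 ?addr0 // => l l_neq.
by rewrite (inj_eq c_inj) (negbTE l_neq) mul0r.
Qed.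

Lemma ketL_support b w : ketL c x b w != 0 -> w \in codom c.
Proof. by apply: contraR => /(ketL_out b) ->; rewrite eqxx. Qed.

Lemma ketL_disjoint w : ketL c x false w = 0 \/ ketL c x true w = 0.
Proof.
have [/codomP [k ->] | w_out] := boolP (w \in codom c); last by left; exact: ketL_out.
rewrite !ketL_code /ampL /weightL.
by case: (xpos_xneg_eq0 k) => ->; [left | right]; rewrite sqrtr0 mul0r rmorph0.
Qed.

Lemma inner_code i j :
  inner (ketL c x i) (ketL c x j) = \sum_k (ampL i k * ampL j k)%:C.
Proof.
rewrite /inner sum_over_code => [|w w_out]; last by rewrite (ketL_out j w_out) mulr0.
by apply: eq_bigr => k _; rewrite !ketL_code conj_Creal ?complex_real // [RHS]rmorphM.
Qed.

Lemma braket_code i j (P : word q n -> word q n -> R[i]) :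
  braket (ketL c x i) P (ketL c x j) =
  \sum_k \sum_l (ampL i k * ampL j l)%:C * P (c k) (c l).
Proof.
rewrite /braket sum_over_code => [|u u_out]; last first.
  by rewrite big1 // => v _; rewrite ketL_out // conjC0 !mul0r.
apply: eq_bigr => k _; rewrite sum_over_code => [|v v_out]; last first.
  by rewrite (ketL_out j v_out) mulr0.
apply: eq_bigr => l _.
by rewrite !ketL_code conj_Creal ?complex_real // [in RHS]rmorphM mulrAC.
Qed.

Lemma braket_pauli_far a b i j : (0 < q)%N -> (wt a != 0)%N ->
  (forall k l, c k != c l -> wt a < hdist (c k) (c l))%N ->
  braket (ketL c x i) (pauli R a b) (ketL c x j) = 0.
Proof.
move=> q_gt0 wt_a far; rewrite braket_code big1 // => k _.
by rewrite big1 // => l _; rewrite pauli_eq0 ?mulr0 //; exact: far.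
Qed.

End CodeStates.

Section KernelVector.
Variables (R : realType) (q n dZ m : nat) (c : 'I_m -> word q n) (x : 'cV[R]_m).
Hypothesis c_inj : injective c.
Hypothesis Ax0 : Amx R dZ c *m x = 0.

Lemma Amx_row_eq0 r : r \in rowsA q n dZ -> \sum_k Aentry R c r k * x k 0 = 0.
Proof.
move=> r_row; move/matrixP: Ax0 => /(_ (enum_rank_in r_row r) 0).
rewrite !mxE => row_r; rewrite -[RHS]row_r; apply: eq_bigr => k _.
by rewrite mxE enum_rankK_in.
Qed.

Lemma sum_x_eq0 : \sum_k x k 0 = 0.
Proof.
have row1 : None \in rowsA q n dZ by rewrite inE.
by rewrite -[RHS](Amx_row_eq0 row1); apply: eq_bigr => k _; rewrite mul1r.
Qed.

Lemma kernel_char_eq0 b : (wt b <= dZ - 1)%N ->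
  \sum_k (x k 0)%:C * omega R q ^+ dotw b (c k) = 0.
Proof.
move=> wt_b; have [wt_b0 | wt_b_gt0] := posnP (wt b).
  have dot0 v : dotw b v = 0%N.
    move/eqP: wt_b0; rewrite wt_eq0 => /forallP b0.
    by rewrite /dotw big1 // => i _; rewrite (eqP (b0 i)).
  by under eq_bigr do rewrite dot0 mulr1; rewrite -rmorph_sum sum_x_eq0.
have row_b t : Some (b, t) \in rowsA q n dZ by rewrite inE /= wt_b_gt0.
have := Amx_row_eq0 (row_b false); have := Amx_row_eq0 (row_b true).
rewrite /Aentry /= => sin_eq0 cos_eq0.
under eq_bigr => k _ do
  rewrite omega_expr [_ +i* _]complexE /= mulrDr [(x _ _)%:C * ('i * _)]mulrCA
          ![(x _ _)%:C * _]mulrC -!rmorphM.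
by rewrite big_split /= -mulr_sumr -!rmorph_sum cos_eq0 sin_eq0 rmorph0 mulr0 addr0.
Qed.

Lemma sum_weightL t : \sum_k weightL x t k = xsum x.
Proof.
case: t => //; have : \sum_k (xpos x k - xneg x k) = 0.
  by apply: etrans sum_x_eq0; apply: eq_bigr => k _; exact: xposBxneg.
by rewrite sumrB => /eqP; rewrite subr_eq0 => /eqP <-.
Qed.

Lemma xsum_gt0 : x != 0 -> 0 < xsum x.
Proof.
move=> x_neq0; rewrite lt_def xsum_ge0 andbT; apply: contra x_neq0 => /eqP X0.
have weight0 t k : weightL x t k = 0.
  have sum0 : \sum_k weightL x t k = 0 by rewrite sum_weightL.
  by rewrite (psumr_eq0P _ sum0) // => i _; exact: weightL_ge0.
apply/eqP/matrixP => k j; rewrite ord1 mxE -xposBxneg.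
by move: (weight0 false k) (weight0 true k) => /= -> ->; rewrite subr0.
Qed.

Lemma char_xpos_eq_xneg b : (wt b <= dZ - 1)%N ->
  \sum_k (xpos x k)%:C * omega R q ^+ dotw b (c k) =
  \sum_k (xneg x k)%:C * omega R q ^+ dotw b (c k).
Proof.
move/kernel_char_eq0 => char0; apply/eqP; rewrite -subr_eq0 -sumrB -[X in _ == X]char0.
by apply/eqP/eq_bigr => k _; rewrite -mulrBl -rmorphB xposBxneg.
Qed.

Lemma ketL_orthonormal i j : x != 0 -> inner (ketL c x i) (ketL c x j) = (i == j)%:R.
Proof.
move=> x_neq0; rewrite inner_code //.
under eq_bigr do rewrite ampL_mul.
rewrite -rmorph_sum -mulr_sumr -mulr_suml sum_weightL divff ?mulr1 ?rmorph_nat //.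
exact/lt0r_neq0/xsum_gt0.
Qed.

Lemma braket_pauli_wt0 a b i j : (0 < q)%N -> wt a = 0%N -> (wt b <= dZ - 1)%N ->
  braket (ketL c x i) (pauli R a b) (ketL c x j) =
  (\sum_k (xpos x k / xsum x)%:C * omega R q ^+ dotw b (c k)) * (i == j)%:R.
Proof.
move=> q_gt0 wt_a wt_b; rewrite braket_code //.
rewrite (eq_bigr (fun k => (i == j)%:R * ((weightL x i k / xsum x)%:C
                                          * omega R q ^+ dotw b (c k)))); last first.
  move=> k _; rewrite (bigD1 k) //= big1 ?addr0 => [|l l_neq]; last first.
    by rewrite pauli_wt0 // (inj_eq c_inj) eq_sym (negbTE l_neq) !mul0r mulr0.
  by rewrite pauli_wt0 // eqxx mul1r ampL_mul rmorphM rmorph_nat mulrA.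
have scale t : \sum_k (t k / xsum x)%:C * omega R q ^+ dotw b (c k) =
               ((xsum x)^-1)%:C * \sum_k (t k)%:C * omega R q ^+ dotw b (c k).
  by rewrite mulr_sumr; apply: eq_bigr => k _; rewrite rmorphM mulrA [_^-1%:C * _]mulrC.
rewrite -mulr_sumr mulrC.
by case: i; case: j; rewrite ?mulr0 // !scale /weightL ?char_xpos_eq_xneg.
Qed.

End KernelVector.

Theorem lemma2 (R : realType) (q n dX dZ : nat)
  (hq : (2 <= q)%N) (hn : (1 <= n)%N) (hdX : (1 <= dX)%N) (hdZ : (1 <= dZ)%N)
  (C : {set word q n})
  (hdist_C : forall u v, u \in C -> v \in C -> u != v -> (dX <= hdist u v)%N)
  (hcard : (2 * Vq q n (dZ - 1) <= #|C|)%N)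
  (m : nat) (c : 'I_m -> word q n) (hc_inj : injective c)
  (hc_onto : forall w, w \in C <-> exists k, c k = w) :
  (exists x : 'cV[R]_m, x != 0 /\ Amx R dZ c *m x = 0) /\
  (forall x : 'cV[R]_m, x != 0 -> Amx R dZ c *m x = 0 ->
     (forall i j : bool, inner (ketL c x i) (ketL c x j) = (i == j)%:R) /\
     (forall (i : bool) w, ketL c x i w != 0 -> w \in C) /\
     (forall w, ketL c x false w = 0 \/ ketL c x true w = 0) /\
     (forall a b : word q n, (wt a <= dX - 1)%N -> (wt b <= dZ - 1)%N ->
        exists cP : R[i], forall i j : bool,
          braket (ketL c x i) (pauli R a b) (ketL c x j) = cP * (i == j)%:R)).
Proof.
have q_gt0 : (0 < q)%N by apply: ltnW.
have C_codom : C =i codom c.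
  move=> w; apply/idP/codomP => [/hc_onto [k <-] | [k ->]]; first by exists k.
  by apply/hc_onto; exists k.
have card_C : #|C| = m by rewrite (eq_card C_codom) card_codom // card_ord.
split.
  apply: kernel_nontrivial; rewrite -card_C.
  exact: leq_trans (card_rowsA n dZ q_gt0) hcard.
move=> x x_neq0 Ax0; split; [|split; [|split]].
- by move=> i j; apply: (ketL_orthonormal hc_inj Ax0).
- by move=> i w /ketL_support; rewrite C_codom.
- by move=> w; apply: ketL_disjoint.
move=> a b wt_a wt_b; have [wt_a0 | wt_a_neq0] := eqVneq (wt a) 0%N.
  by eexists => i j; apply: (braket_pauli_wt0 hc_inj Ax0).
exists 0 => i j; rewrite mul0r; apply: braket_pauli_far => // k l ckl.
have := hdist_C (c k) (c l); rewrite !C_codom !codom_f => /(_ isT isT ckl).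
lia.
Qed.
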